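(* Let $k\geq0$, $q\geq1$, $m\ge1$ and $\gamma=(\gamma_1,\ldots,\gamma_m)\in\mathbb{Z}^m$ with $\gamma_1\ge 2$ and $2\le\gamma_{i+1}\le\gamma_i+1$ for all $1\le i<m$. Then \[F^{2143}(k,q,\gamma)=\begin{cases} s^k & m=1,\\ F^{2143}(0,q{-}1,\gamma)+F^{2143}(\gamma_1{+}1{-}\gamma_2,q,\gamma') & m\geq2,\ k=0,\\ sF^{2143}(k{-}1,q,\gamma)+sF^{2143}(\gamma_1{+}1{-}\gamma_2{+}k,q,\gamma')-sF^{2143}(\gamma_1{-}\gamma_2{+}k,q,\gamma') & m\geq2,\ k\geq1. \end{cases}\]
   Context: Define $\mathrm{suc}^{2143}$ on integer triples by $\mathrm{suc}^{2143}(x,y,z)=\emptyset$ if $z\le 0$ and, for $z\ge1$, $\mathrm{suc}^{2143}(x,y,z)=\{(2,y{+}1,z),\ldots,(x{+}1,y{+}1,z)\}\cup\{(x,x{+}1,z),\ldots,(x,y,z)\}\cup\mathrm{suc}^{2143}(x,x,z{-}1)$ (second set empty if $y\le x$). A path in $\mathcal{P}^{2143}$ is a finite sequence $P=(v_1,\ldots,v_r)$, $r\ge1$, of points of $\mathbb{Z}^3$ with $v_1=(x,y,z)$ satisfying $2\le x\le y$, $z\ge1$, and $v_{i+1}\in\mathrm{suc}^{2143}(v_i)$ for all $i$; its length is $\ell(P)=r$. An edge $v_i\to v_{i+1}$ from $(x_1,y_1,z_1)$ to $(x_2,y_2,z_2)$ is recorded if either $z_1=z_2$ and $y_2=y_1+1$,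 or $z_1>z_2$. The signature $\mathrm{sig}(P)$ is the tuple consisting of the $x$-coordinate of $v_1$ followed by the $x$-coordinates of the endpoints of the recorded edges, in order. For $k\ge0$, $q\ge1$, $\gamma\in\mathbb{Z}^m$, $m\ge1$, let $\mathcal{P}^{2143}_{k,q,\gamma}$ be the set of paths in $\mathcal{P}^{2143}$ starting at $(\gamma_1,\gamma_1+k,q)$ with signature $\gamma$, and $F^{2143}(k,q,\gamma)=\sum_{P\in\mathcal{P}^{2143}_{k,q,\gamma}}t^{\ell(P)-m}$, a formal power series in $t$. By convention $F^{2143}(k,q,\gamma)=0$ if $q\le0$ or $\gamma$ is the empty tuple. Write $s=1/(1-t)=1+t+t^2+\cdots$ and $\gamma'=(\gamma_2,\ldots,\gamma_m)$ (empty if $m=1$). *)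

From Stdlib Require Import ZArith List.
Import ListNotations.
Open Scope Z_scope.
Open Scope bool_scope.

Definition pt := (Z * Z * Z)%type.
Definition px (v : pt) : Z := fst (fst v).
Definition py (v : pt) : Z := snd (fst v).
Definition pz (v : pt) : Z := snd v.

Definition zrange (lo hi : Z) : list Z :=
  map (fun i => lo + Z.of_nat i) (seq 0 (Z.to_nat (hi - lo + 1))).

Fixpoint suc_aux (fuel : nat) (x y z : Z) : list pt :=
  if z <=? 0 then []
  else map (fun a => (a, y + 1, z)) (zrange 2 (x + 1))
       ++ map (fun b => (x, b, z)) (zrange (x + 1) y)
       ++ match fuel with
          | O => []
          | S f => suc_aux f x x (z - 1)
          end.

Definition suc2143 (v : pt) : list pt :=
  suc_aux (Z.to_nat (pz v)) (px v) (py v) (pz v).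

Definition pt_eqb (v w : pt) : bool :=
  (px v =? px w) && (py v =? py w) && (pz v =? pz w).

Definition in_suc (w v : pt) : bool := existsb (pt_eqb w) (suc2143 v).

Fixpoint succ_chain (l : list pt) : bool :=
  match l with
  | v :: ((w :: _) as rest) => in_suc w v && succ_chain rest
  | _ => true
  end.

Definition is_path2143 (l : list pt) : bool :=
  match l with
  | [] => false
  | v :: _ => (2 <=? px v) && (px v <=? py v) && (1 <=? pz v) && succ_chain l
  end.

(* all sequences of length r starting at v whose consecutive entries are
   successors; every path of length r starting at v appears here
   (possibly with repetitions, which is why we dedupe below) *)
Fixpoint chains_from (r : nat) (v : pt) : list (list pt) :=
  match r with
  | O => []
  | S O => [[v]]
  | S r' => map (cons v) (flat_map (chains_from r') (suc2143 v))
  end.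

Definition recorded (v w : pt) : bool :=
  ((pz v =? pz w) && (py w =? py v + 1)) || (pz w <? pz v).

Fixpoint rec_xs (l : list pt) : list Z :=
  match l with
  | v :: ((w :: _) as rest) =>
      (if recorded v w then [px w] else []) ++ rec_xs rest
  | _ => []
  end.

Definition sig2143 (l : list pt) : list Z :=
  match l with
  | [] => []
  | v :: _ => px v :: rec_xs l
  end.

Definition pt_eq_dec (v w : pt) : {v = w} + {v <> w}.
Proof. decide equality; try apply Z.eq_dec; decide equality; apply Z.eq_dec. Defined.

Definition list_pt_dec := list_eq_dec pt_eq_dec.

Definition paths_len (k q : Z) (gamma : list Z) (r : nat) : list (list pt) :=
  nodup list_pt_dec
    (filter (fun l => is_path2143 l &&
                     if list_eq_dec Z.eq_dec (sig2143 l) gamma then true else false)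
       (chains_from r (hd 0 gamma, hd 0 gamma + k, q))).

Definition pser := nat -> Z.

(* F^{2143}(k,q,gamma) : coefficient of t^n = #{P : l(P) - m = n} *)
Definition F2143 (k q : Z) (gamma : list Z) : pser := fun n =>
  match gamma with
  | [] => 0
  | _ => if q <=? 0 then 0
         else Z.of_nat (length (paths_len k q gamma (n + length gamma)%nat))
  end.

Definition ps_add (f g : pser) : pser := fun n => f n + g n.
Definition ps_sub (f g : pser) : pser := fun n => f n - g n.
Definition ps_one : pser := fun n => if Nat.eqb n 0 then 1 else 0.
Definition ps_mul (f g : pser) : pser := fun n =>
  fold_right Z.add 0 (map (fun i => f i * g (n - i)%nat) (seq 0 (S n))).
(* s = 1/(1-t) = 1 + t + t^2 + ... *)
Definition ps_s : pser := fun _ => 1.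
Definition ps_pow (f : pser) (k : nat) : pser := Nat.iter k (ps_mul f) ps_one.

From Stdlib Require Import ZArith List Lia FinFun FunctionalExtensionality.
Import ListNotations.
Open Scope Z_scope.

(* The successors of (x,y,z) fall
   into three blocks: the recorded moves (a,y+1,z), 2 <= a <= x+1, which
   consume the next signature entry a; the unrecorded moves (x,b,z),
   x < b <= y; and the successors of (x,x,z-1), all recorded from (x,y,z) just
   as from (x,x,z-1).  For y = x the middle block is empty and the last one
   counts F(0,q-1,gamma): this is the case k = 0.  Otherwise, comparing y with
   y-1, the middle block gains only the move to (x,y,z) itself, so
     F(k) = F(k-1) + F(x+1-a+k, gamma') - F(x-a+k, gamma') + t F(k),
   and F = G + t F forces F = s G.  For gamma = (x) no entry is left to
   consume, so F(k) = F(k-1) + t F(k) and F(k) = s^k. *)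

Definition sumZ (l : list Z) : Z := fold_right Z.add 0 l.

Lemma sumZ_app l1 l2 : sumZ (l1 ++ l2) = sumZ l1 + sumZ l2.
Proof. induction l1 as [|a l1 IH]; simpl; [|rewrite IH]; lia. Qed.

Lemma sumZ_map_zero {A} (f : A -> Z) l : (forall x, In x l -> f x = 0) -> sumZ (map f l) = 0.
Proof. induction l as [|a l IH]; simpl; intros H; [reflexivity|]. rewrite H, IH; auto. Qed.

Lemma sumZ_indicator (h : Z -> Z) a0 l : NoDup l ->
  sumZ (map (fun a => if a0 =? a then h a else 0) l) =
  if in_dec Z.eq_dec a0 l then h a0 else 0.
Proof.
  induction 1 as [|a l Hal Hl IH]; simpl; [reflexivity|]. rewrite IH.
  destruct (Z.eq_dec a a0) as [<-|Hne].
  - rewrite Z.eqb_refl. destruct (in_dec Z.eq_dec a l); [contradiction | lia].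
  - rewrite (proj2 (Z.eqb_neq a0 a)) by congruence. destruct (in_dec Z.eq_dec a0 l); lia.
Qed.

Lemma in_zrange b lo hi : In b (zrange lo hi) <-> lo <= b <= hi.
Proof.
  unfold zrange. rewrite in_map_iff. split.
  - intros [i [<- Hi]]. apply in_seq in Hi. lia.
  - intros Hb. exists (Z.to_nat (b - lo)). rewrite in_seq. lia.
Qed.

Lemma zrange_NoDup lo hi : NoDup (zrange lo hi).
Proof. apply Injective_map_NoDup; [intros i j; lia | apply seq_NoDup]. Qed.

Lemma zrange_empty lo hi : hi < lo -> zrange lo hi = [].
Proof. intros H. unfold zrange. now replace (Z.to_nat (hi - lo + 1)) with 0%nat by lia. Qed.

Lemma zrange_snoc lo hi : lo <= hi + 1 -> zrange lo (hi + 1) = zrange lo hi ++ [hi + 1].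
Proof.
  intros H. unfold zrange.
  replace (Z.to_nat (hi + 1 - lo + 1)) with (S (Z.to_nat (hi - lo + 1))) by lia.
  rewrite seq_S, map_app. cbn. do 2 f_equal. lia.
Qed.

Lemma sumZ_zrange_indicator (h : Z -> Z) a0 lo hi :
  sumZ (map (fun a => if a0 =? a then h a else 0) (zrange lo hi)) =
  if (lo <=? a0) && (a0 <=? hi) then h a0 else 0.
Proof.
  rewrite sumZ_indicator by apply zrange_NoDup.
  destruct (in_dec Z.eq_dec a0 (zrange lo hi)) as [Hin|Hout]; rewrite in_zrange in *;
    destruct (Z.leb_spec lo a0), (Z.leb_spec a0 hi); cbn; lia.
Qed.

Lemma suc_aux_nonpos f x y z : z <= 0 -> suc_aux f x y z = [].
Proof. intros H. destruct f; cbn; destruct (Z.leb_spec z 0); easy || lia. Qed.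

Lemma suc_unfold x y z : 1 <= z ->
  suc2143 (x, y, z) =
    map (fun a => (a, y + 1, z)) (zrange 2 (x + 1))
    ++ map (fun b => (x, b, z)) (zrange (x + 1) y) ++ suc2143 (x, x, z - 1).
Proof.
  intros Hz. unfold suc2143. cbn [px py pz fst snd].
  replace (Z.to_nat z) with (S (Z.to_nat (z - 1))) by lia. cbn.
  destruct (Z.leb_spec z 0); [lia | reflexivity].
Qed.

Lemma suc_aux_mem f x y z w : In w (suc_aux f x y z) ->
  (pz w = z /\ py w = y + 1) \/ (pz w = z /\ px w = x /\ x + 1 <= py w <= y) \/ pz w < z.
Proof.
  revert y z. induction f as [|f IH]; intros y z; cbn; destruct (Z.leb_spec z 0); try easy;
    rewrite !in_app_iff, !in_map_iff.
  all: intros [[a [<- _]] | [[b [<- Hb]] | Hw]]; cbn; [now left | rewrite in_zrange in Hb; lia |].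
  - easy.
  - apply IH in Hw. lia.
Qed.

Lemma suc_mem x y z w : In w (suc2143 (x, y, z)) ->
  (pz w = z /\ py w = y + 1) \/ (pz w = z /\ px w = x /\ x + 1 <= py w <= y) \/ pz w < z.
Proof. apply suc_aux_mem. Qed.

Lemma NoDup_suc_blocks x y z C : NoDup C -> (forall w, In w C -> pz w < z) ->
  NoDup (map (fun a => (a, y + 1, z)) (zrange 2 (x + 1))
         ++ map (fun b => (x, b, z)) (zrange (x + 1) y) ++ C).
Proof.
  intros HC HCz.
  assert (Hinj : Injective (fun a : Z => (a, y + 1, z) : pt)) by (intros a b; congruence).
  assert (Hinj' : Injective (fun b : Z => (x, b, z) : pt)) by (intros a b; congruence).
  apply NoDup_app; [apply Injective_map_NoDup; auto using zrange_NoDup | |].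
  - apply NoDup_app; [apply Injective_map_NoDup; auto using zrange_NoDup | exact HC |].
    intros w Hw HwC. apply HCz in HwC. apply in_map_iff in Hw as [b [<- _]]. cbn in HwC. lia.
  - intros w Hw Hw'. apply in_map_iff in Hw as [a [<- _]].
    apply in_app_iff in Hw' as [Hw' | HwC].
    + apply in_map_iff in Hw' as [b [Hb Hb']]. apply in_zrange in Hb'. injection Hb. lia.
    + apply HCz in HwC. cbn in HwC. lia.
Qed.

Lemma suc_aux_NoDup f x y z : NoDup (suc_aux f x y z).
Proof.
  revert y z. induction f as [|f IH]; intros y z; cbn; destruct (Z.leb_spec z 0); try constructor.
  all: apply NoDup_suc_blocks; [try constructor; apply IH |].
  - easy.
  - intros w Hw. apply suc_aux_mem in Hw. lia.
Qed.

Lemma suc_NoDup v : NoDup (suc2143 v).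
Proof. apply suc_aux_NoDup. Qed.

Lemma chains_from_cons r v l : In l (chains_from r v) ->
  exists rest, l = v :: rest /\ succ_chain l = true.
Proof.
  revert v l. induction r as [|[|r] IH]; intros v l; [easy | cbn; intros [<- | []]; now exists [] |].
  change (chains_from (S (S r)) v) with (map (cons v) (flat_map (chains_from (S r)) (suc2143 v))).
  rewrite in_map_iff. intros [l' [<- Hl']]. apply in_flat_map in Hl' as [w [Hw Hl']].
  destruct (IH _ _ Hl') as [rest [-> Hs]]. exists (w :: rest). split; [reflexivity |].
  change (in_suc w v && succ_chain (w :: rest) = true). rewrite Hs, Bool.andb_true_r.
  apply existsb_exists. exists w. split; [exact Hw |].
  unfold pt_eqb. now rewrite !Z.eqb_refl.
Qed.

Lemma NoDup_flat_map {A B} (f : A -> list B) (l : list A) :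
  NoDup l -> (forall x, NoDup (f x)) ->
  (forall x y b, In b (f x) -> In b (f y) -> x = y) -> NoDup (flat_map f l).
Proof.
  intros Hl Hf Hdisj. induction Hl as [|x l Hx Hl IH]; cbn; [constructor |].
  apply NoDup_app; [apply Hf | exact IH |].
  intros b Hb Hb'. apply in_flat_map in Hb' as [y [Hy Hb']].
  rewrite (Hdisj _ _ _ Hb Hb') in Hx. contradiction.
Qed.

Lemma chains_from_NoDup r v : NoDup (chains_from r v).
Proof.
  revert v. induction r as [|[|r] IH]; intros v; [constructor | repeat constructor; easy |].
  change (chains_from (S (S r)) v) with (map (cons v) (flat_map (chains_from (S r)) (suc2143 v))).
  apply Injective_map_NoDup; [intros l l'; congruence |].
  apply NoDup_flat_map; auto using suc_NoDup.
  intros w w' l Hl Hl'.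
  destruct (chains_from_cons _ _ _ Hl) as [rest [-> _]].
  destruct (chains_from_cons _ _ _ Hl') as [rest' [E _]]. congruence.
Qed.

Definition zlist_eqb (s g : list Z) : bool :=
  if list_eq_dec Z.eq_dec s g then true else false.

Lemma zlist_eqb_cons a s g :
  zlist_eqb (a :: s) g = match g with [] => false | b :: g' => (b =? a) && zlist_eqb s g' end.
Proof.
  unfold zlist_eqb. destruct g as [|b g']; [destruct list_eq_dec; congruence |].
  destruct (Z.eqb_spec b a) as [<-|Hne]; destruct list_eq_dec, list_eq_dec; cbn; congruence.
Qed.

Definition step_count (rec : pt -> list Z -> Z) (v w : pt) (g : list Z) : Z :=
  if recorded v w then
    match g with [] => 0 | a :: g' => if a =? px w then rec w g' else 0 end
  else rec w g.

Fixpoint nchains (r : nat) (v : pt) (g : list Z) : Z :=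
  match r with
  | O => 0
  | S O => match g with [] => 1 | _ => 0 end
  | S (S _ as r') => sumZ (map (fun w => step_count (nchains r') v w g) (suc2143 v))
  end.

Lemma nchains_SS r v g :
  nchains (S (S r)) v g = sumZ (map (fun w => step_count (nchains (S r)) v w g) (suc2143 v)).
Proof. reflexivity. Qed.

Lemma length_filter_map {A B} (P : B -> bool) (f : A -> B) l :
  length (filter P (map f l)) = length (filter (fun x => P (f x)) l).
Proof. induction l as [|a l IH]; cbn; [| destruct (P (f a)); cbn]; auto. Qed.

Lemma length_filter_flat_map {A B} (P : B -> bool) (f : A -> list B) l :
  Z.of_nat (length (filter P (flat_map f l))) =
  sumZ (map (fun x => Z.of_nat (length (filter P (f x)))) l).
Proof.
  induction l as [|a l IH]; [reflexivity |].
  cbn [flat_map map]. rewrite filter_app, length_app, Nat2Z.inj_add, IH. reflexivity.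
Qed.

Lemma filter_false {A} (l : list A) : filter (fun _ => false) l = [].
Proof. induction l; easy. Qed.

Lemma count_chains_from r v g :
  Z.of_nat (length (filter (fun l => zlist_eqb (rec_xs l) g) (chains_from r v))) = nchains r v g.
Proof.
  revert v g. induction r as [|[|r] IH]; intros v g; [reflexivity | cbn; now destruct g |].
  change (chains_from (S (S r)) v) with (map (cons v) (flat_map (chains_from (S r)) (suc2143 v))).
  rewrite length_filter_map, length_filter_flat_map, nchains_SS. f_equal.
  apply map_ext. intros w. unfold step_count.
  assert (Hrec : forall l, In l (chains_from (S r) w) ->
    zlist_eqb (rec_xs (v :: l)) g =
      if recorded v w then
        match g with [] => false | a :: g' => (a =? px w) && zlist_eqb (rec_xs l) g' end
      else zlist_eqb (rec_xs l) g).
  { intros l Hl. destruct (chains_from_cons _ _ _ Hl) as [rest [-> _]].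
    change (rec_xs (v :: w :: rest)) with
      ((if recorded v w then [px w] else []) ++ rec_xs (w :: rest)).
    destruct (recorded v w); [apply zlist_eqb_cons | reflexivity]. }
  rewrite (filter_ext_in _ _ _ Hrec).
  destruct (recorded v w); [| apply IH].
  destruct g as [|a g']; [now rewrite filter_false |].
  destruct (a =? px w); [apply IH | now rewrite filter_false].
Qed.

Lemma F2143_nchains k q a g n : 1 <= q -> 0 <= k -> 2 <= a ->
  F2143 k q (a :: g) n = nchains (n + S (length g)) (a, a + k, q) g.
Proof.
  intros Hq Hk Ha. unfold F2143. destruct (Z.leb_spec q 0); [lia |].
  unfold paths_len. rewrite nodup_fixed_point by apply NoDup_filter, chains_from_NoDup.
  rewrite <- count_chains_from. do 2 f_equal. apply filter_ext_in. intros l Hl.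
  destruct (chains_from_cons _ _ _ Hl) as [rest [-> Hs]].
  unfold is_path2143. rewrite Hs. cbn [px py pz fst snd hd sig2143].
  destruct (Z.leb_spec 2 a), (Z.leb_spec a (a + k)), (Z.leb_spec 1 q); try lia. cbn [andb].
  change (zlist_eqb (a :: rec_xs ((a, a + k, q) :: rest)) (a :: g)
          = zlist_eqb (rec_xs ((a, a + k, q) :: rest)) g).
  now rewrite zlist_eqb_cons, Z.eqb_refl.
Qed.

Lemma recorded_of_pz_lt v w : pz w < pz v -> recorded v w = true.
Proof. intros H. unfold recorded. apply Bool.orb_true_iff. right. now apply Z.ltb_lt. Qed.

Lemma recorded_suc_diag x z w : In w (suc2143 (x, x, z)) -> recorded (x, x, z) w = true.
Proof.
  intros Hw. apply suc_mem in Hw as [[Hz Hy] | [? | Hz]]; [| lia | now apply recorded_of_pz_lt].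
  unfold recorded. cbn [pz py snd fst]. now rewrite Hz, Hy, !Z.eqb_refl.
Qed.

Definition nchains_up (x y z : Z) (g : list Z) (r : nat) : Z :=
  match g with
  | [] => 0
  | a :: g' => if (2 <=? a) && (a <=? x + 1) then nchains (S r) (a, y + 1, z) g' else 0
  end.

Lemma nchains_split r x y z g : 1 <= z ->
  nchains (S (S r)) (x, y, z) g =
    nchains_up x y z g r + sumZ (map (fun b => nchains (S r) (x, b, z) g) (zrange (x + 1) y))
    + nchains (S (S r)) (x, x, z - 1) g.
Proof.
  intros Hz. rewrite !nchains_SS, suc_unfold by lia.
  rewrite !map_app, !sumZ_app, !map_map, Z.add_assoc. f_equal; [f_equal |].
  - assert (Hup : forall a, recorded (x, y, z) (a, y + 1, z) = true).
    { intros a. unfold recorded. cbn. now rewrite !Z.eqb_refl. }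
    unfold nchains_up, step_count. destruct g as [|a0 g'].
    + apply sumZ_map_zero. intros a _. now rewrite Hup.
    + rewrite <- (sumZ_zrange_indicator (fun a => nchains (S r) (a, y + 1, z) g')).
      f_equal. apply map_ext. intros a. now rewrite Hup.
  - f_equal. apply map_ext_in. intros b Hb. apply in_zrange in Hb.
    unfold step_count, recorded. cbn [px py pz fst snd].
    destruct (Z.eqb_spec b (y + 1)), (Z.ltb_spec z z); [lia .. | now rewrite Bool.andb_false_r].
  - f_equal. apply map_ext_in. intros w Hw. unfold step_count.
    rewrite (recorded_suc_diag _ _ _ Hw), recorded_of_pz_lt; [reflexivity |].
    apply suc_mem in Hw. cbn. lia.
Qed.

Lemma nchains_diag r x z g : 1 <= z ->
  nchains (S (S r)) (x, x, z) g = nchains_up x x z g r + nchains (S (S r)) (x, x, z - 1) g.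
Proof. intros Hz. rewrite nchains_split, zrange_empty by lia. cbn. lia. Qed.

Lemma nchains_pred_y r x y z g : 1 <= z -> x + 1 <= y ->
  nchains (S (S r)) (x, y, z) g =
    nchains (S (S r)) (x, y - 1, z) g + nchains_up x y z g r - nchains_up x (y - 1) z g r
    + nchains (S r) (x, y, z) g.
Proof.
  intros Hz Hy. rewrite (nchains_split r x y), (nchains_split r x (y - 1)) by lia.
  assert (Hsnoc := zrange_snoc (x + 1) (y - 1) ltac:(lia)). rewrite Z.sub_add in Hsnoc.
  rewrite Hsnoc, map_app, sumZ_app. cbn. lia.
Qed.

Lemma nchains_nonpos_z r x z g : z <= 0 -> nchains (S (S r)) (x, x, z) g = 0.
Proof.
  intros Hz. rewrite nchains_SS. unfold suc2143. cbn [px py pz fst snd].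
  now rewrite suc_aux_nonpos.
Qed.

Lemma nchains_diag_nil r x z : nchains (S (S r)) (x, x, z) [] = 0.
Proof.
  rewrite nchains_SS. apply sumZ_map_zero. intros w Hw. unfold step_count.
  now rewrite recorded_suc_diag.
Qed.

Lemma nchains_short r v g : (r <= length g)%nat -> nchains r v g = 0.
Proof.
  revert v g. induction r as [|[|r] IH]; intros v g Hr; [reflexivity | now destruct g; cbn in * |].
  rewrite nchains_SS. apply sumZ_map_zero. intros w _. unfold step_count.
  destruct (recorded v w); [destruct g as [|a g']; [reflexivity |] |].
  - destruct (a =? px w); [apply IH; cbn in Hr; lia | reflexivity].
  - apply IH. lia.
Qed.

Definition ps_mul_t (f : pser) : pser := fun n => match n with O => 0 | S n' => f n' end.

Lemma ps_mul_s_rec f n : ps_mul ps_s f n = f n + ps_mul_t (ps_mul ps_s f) n.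
Proof.
  unfold ps_mul, ps_s. destruct n as [|n]; cbn [ps_mul_t]; [cbn; now destruct (f 0%nat) |].
  change (seq 0 (S (S n))) with (0%nat :: seq 1 (S n)).
  rewrite <- seq_shift. cbn [map fold_right]. rewrite map_map.
  now rewrite Nat.sub_0_r, Z.mul_1_l.
Qed.

Lemma ps_eq_of_mul_t_rec f h g :
  (forall n, f n = g n + ps_mul_t f n) -> (forall n, h n = g n + ps_mul_t h n) -> f = h.
Proof.
  intros Hf Hh. apply functional_extensionality. intros n.
  induction n as [|n IH]; rewrite Hf, Hh; cbn [ps_mul_t]; lia.
Qed.

Lemma F2143_single_base x q : 2 <= x -> 1 <= q -> F2143 0 q [x] = ps_one.
Proof.
  intros Hx Hq. apply functional_extensionality. intros [|n];
    rewrite F2143_nchains, Z.add_0_r by lia; [reflexivity |].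
  replace (S n + S (length []))%nat with (S (S n)) by (cbn; lia).
  now rewrite nchains_diag, nchains_diag_nil by lia.
Qed.

Lemma F2143_single_rec k x q n : 1 <= k -> 2 <= x -> 1 <= q ->
  F2143 k q [x] n = F2143 (k - 1) q [x] n + ps_mul_t (F2143 k q [x]) n.
Proof.
  intros Hk Hx Hq. destruct n as [|n]; cbn [ps_mul_t];
    rewrite !F2143_nchains by lia; [reflexivity |].
  replace (S n + S (length []))%nat with (S (S n)) by (cbn; lia).
  rewrite nchains_pred_y by lia. cbn [nchains_up].
  replace (x + k - 1) with (x + (k - 1)) by lia.
  replace (n + S (length []))%nat with (S n) by (cbn; lia). lia.
Qed.

Lemma F2143_single k x q : 0 <= k -> 2 <= x -> 1 <= q ->
  F2143 k q [x] = ps_pow ps_s (Z.to_nat k).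
Proof.
  intros Hk Hx Hq. rewrite <- (Z2Nat.id k) at 1 by exact Hk.
  induction (Z.to_nat k) as [|K IH]; [now apply F2143_single_base |].
  apply (ps_eq_of_mul_t_rec _ _ (ps_pow ps_s K)); intros n.
  - rewrite F2143_single_rec, <- IH by lia. do 3 f_equal. lia.
  - apply ps_mul_s_rec.
Qed.

Lemma F2143_nonpos_q k q gamma n : q <= 0 -> F2143 k q gamma n = 0.
Proof.
  intros Hq. unfold F2143. destruct gamma; [reflexivity |].
  now rewrite (proj2 (Z.leb_le _ _) Hq).
Qed.

Lemma F2143_k0 x a g q : 2 <= x -> 2 <= a <= x + 1 -> 1 <= q ->
  F2143 0 q (x :: a :: g) = ps_add (F2143 0 (q - 1) (x :: a :: g)) (F2143 (x + 1 - a) q (a :: g)).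
Proof.
  intros Hx Ha Hq. apply functional_extensionality. intros n. unfold ps_add.
  rewrite (F2143_nchains 0 q x), (F2143_nchains (x + 1 - a) q a) by lia.
  replace (n + S (length (a :: g)))%nat with (S (S (n + length g))) by (cbn; lia).
  rewrite Z.add_0_r, nchains_diag by lia. unfold nchains_up.
  destruct (Z.leb_spec 2 a), (Z.leb_spec a (x + 1)); try lia. cbn [andb].
  replace (a + (x + 1 - a)) with (x + 1) by lia.
  replace (n + S (length g))%nat with (S (n + length g)) by lia.
  rewrite Z.add_comm. f_equal.
  destruct (Z.leb_spec (q - 1) 0).
  - now rewrite nchains_nonpos_z, F2143_nonpos_q.
  - rewrite F2143_nchains, Z.add_0_r by lia. f_equal. cbn. lia.
Qed.

Lemma F2143_kpos_rec k x a g q n : 1 <= k -> 2 <= x -> 2 <= a <= x + 1 -> 1 <= q ->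
  F2143 k q (x :: a :: g) n =
    F2143 (k - 1) q (x :: a :: g) n + F2143 (x + 1 - a + k) q (a :: g) n
    - F2143 (x - a + k) q (a :: g) n + ps_mul_t (F2143 k q (x :: a :: g)) n.
Proof.
  intros Hk Hx Ha Hq.
  rewrite (F2143_nchains k q x), (F2143_nchains (k - 1) q x),
    (F2143_nchains (x + 1 - a + k) q a), (F2143_nchains (x - a + k) q a) by lia.
  replace (n + S (length (a :: g)))%nat with (S (S (n + length g))) by (cbn; lia).
  rewrite nchains_pred_y by lia. unfold nchains_up.
  destruct (Z.leb_spec 2 a), (Z.leb_spec a (x + 1)); try lia. cbn [andb].
  replace (x + k - 1) with (x + (k - 1)) by lia.
  replace (x + k + 1) with (a + (x + 1 - a + k)) by lia.
  replace (x + (k - 1) + 1) with (a + (x - a + k)) by lia.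
  replace (n + S (length g))%nat with (S (n + length g)) by lia.
  enough (Hlast : nchains (S (n + length g)) (x, x + k, q) (a :: g)
                  = ps_mul_t (F2143 k q (x :: a :: g)) n) by lia.
  destruct n as [|n]; cbn [ps_mul_t].
  - apply nchains_short. cbn. lia.
  - rewrite F2143_nchains by lia. f_equal. cbn. lia.
Qed.

Lemma F2143_kpos k x a g q : 1 <= k -> 2 <= x -> 2 <= a <= x + 1 -> 1 <= q ->
  F2143 k q (x :: a :: g) =
    ps_sub (ps_add (ps_mul ps_s (F2143 (k - 1) q (x :: a :: g)))
                   (ps_mul ps_s (F2143 (x + 1 - a + k) q (a :: g))))
           (ps_mul ps_s (F2143 (x - a + k) q (a :: g))).
Proof.
  intros Hk Hx Ha Hq.
  apply (ps_eq_of_mul_t_rec _ _ (fun n => F2143 (k - 1) q (x :: a :: g) n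
            + F2143 (x + 1 - a + k) q (a :: g) n - F2143 (x - a + k) q (a :: g) n)); intros n.
  - now apply F2143_kpos_rec.
  - unfold ps_sub, ps_add. rewrite !(ps_mul_s_rec _ n). destruct n; cbn [ps_mul_t]; lia.
Qed.

Theorem lemma3p4 (k q : Z) (gamma : list Z) :
  0 <= k -> 1 <= q -> (1 <= length gamma)%nat ->
  2 <= hd 0 gamma ->
  (forall i : nat, (S i < length gamma)%nat ->
     2 <= nth (S i) gamma 0 <= nth i gamma 0 + 1) ->
  (length gamma = 1%nat -> F2143 k q gamma = ps_pow ps_s (Z.to_nat k)) /\
  ((2 <= length gamma)%nat -> k = 0 ->
     F2143 k q gamma =
       ps_add (F2143 0 (q - 1) gamma)
              (F2143 (hd 0 gamma + 1 - nth 1 gamma 0) q (tl gamma))) /\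
  ((2 <= length gamma)%nat -> 1 <= k ->
     F2143 k q gamma =
       ps_sub (ps_add (ps_mul ps_s (F2143 (k - 1) q gamma))
                      (ps_mul ps_s (F2143 (hd 0 gamma + 1 - nth 1 gamma 0 + k) q (tl gamma))))
              (ps_mul ps_s (F2143 (hd 0 gamma - nth 1 gamma 0 + k) q (tl gamma)))).
Proof.
  intros Hk Hq Hlen Hx Hstep.
  destruct gamma as [|x [|a g]]; cbn in Hlen, Hx; [lia | |].
  - split; [intros _; now apply F2143_single |]. cbn. split; intros; lia.
  - assert (Ha : 2 <= a <= x + 1) by exact (Hstep 0%nat ltac:(cbn; lia)).
    cbn [hd tl nth length]. split; [discriminate | split].
    + intros _ ->. now apply F2143_k0.
    + intros _ Hk1. now apply F2143_kpos.
Qed.
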